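(* In every psi-calculus: let $B\subseteq\mathcal N$ be finite with $B\#P$, let $\Psi\rhd P\xrightarrow{\alpha}P'$ with $\alpha\neq\tau$, and let $\mathcal F(P)=(\nu\tilde b_P)\Psi_P$ with $\tilde b_P\#\Psi,P,\mathrm{subj}(\alpha),B$. Then there exists a term $M$ such that $B\#M$ and $\Psi\otimes\Psi_P\vdash M\leftrightarrow\mathrm{subj}(\alpha)$.
   Context: Names: a countably infinite set $\mathcal N$ of atomic names. A nominal set is a set equipped with name swapping operations $(a\;b)\cdot X$ satisfying the usual axioms; the support $\mathrm n(X)$ of an element is the set of names affected by swappings, assumed finite; $a \# X$ (''$a$ fresh for $X$'') means $a\notin \mathrm n(X)$, and $A\#X$ for a set/sequence $A$ means every element of $A$ is fresh for $X$. A function/relation is equivariant if it commutes with all swappings. $\tilde a$ denotes a finite sequence of names (also used as the set of its elements). Psi-calculus: given by three nominal datatypes $\mathbf T$ (terms, ranged over by $M,N,K,L$), $\mathbf C$ (conditions, $\varphi$), $\mathbf A$ (assertions, $\Psi$), equivariant operators $\leftrightarrow:\mathbf T\times\mathbf T\to\mathbf C$ (channel equivalence), $\otimes:\mathbf A\times\mathbf A\to\mathbf A$ (composition), $\mathbf 1\in\mathbf A$ (unit), $\vdash\subseteq\mathbf A\times\mathbf C$ (entailment), and equivariant substitution functions $X[\tilde a:=\tilde T]$ (substituting terms for distinct names) on $\mathbf T,\mathbf C,\mathbf A$ satisfying: (S1) if $\tilde a\subseteq\mathrm n(X)$ and $b\in\mathrm n(\tilde T)$ then $b\in\mathrm n(X[\tilde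 a:=\tilde T])$; (S2) if $\tilde b\# X,\tilde a$ then $X[\tilde a:=\tilde T]=((\tilde b\;\tilde a)\cdot X)[\tilde b:=\tilde T]$. Assertions are equivalent, $\Psi\simeq\Psi'$, if for all $\varphi$: $\Psi\vdash\varphi\iff\Psi'\vdash\varphi$. Required: $\Psi\vdash M\leftrightarrow N\Rightarrow\Psi\vdash N\leftrightarrow M$; $\Psi\vdash M\leftrightarrow N\wedge\Psi\vdash N\leftrightarrow L\Rightarrow\Psi\vdash M\leftrightarrow L$; $\Psi\simeq\Psi'\Rightarrow\Psi\otimes\Psi''\simeq\Psi'\otimes\Psi''$; $\Psi\otimes\mathbf 1\simeq\Psi$; $(\Psi\otimes\Psi')\otimes\Psi''\simeq\Psi\otimes(\Psi'\otimes\Psi'')$; $\Psi\otimes\Psi'\simeq\Psi'\otimes\Psi$. Frames: $(\nu\tilde b)\Psi$ with $\tilde b$ binding into $\Psi$, identified up to alpha-equivalence; $(\nu\tilde b_1)\Psi_1\otimes(\nu\tilde b_2)\Psi_2=(\nu\tilde b_1\tilde b_2)(\Psi_1\otimes\Psi_2)$ with $\tilde b_1\#\tilde b_2,\Psi_2$ and $\tilde b_2\#\tilde b_1,\Psi_1$. Agents: $\mathbf 0$; $\overline M N.P$ (output); $\underline M(\lambda\tilde x)N.P$ (input, $\tilde x\subseteq\mathrm n(N)$ without duplicates, binding in $N$ and $P$); $\mathbf{case}\ \varphi_1:P_1\,[\!]\cdots[\!]\,\varphi_n:P_n$; $(\nu a)P$ (binds $a$); $P\mid Q$; $!P$; $(\!|\Psi|\!)$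 (assertion). Agents are identified up to alpha-equivalence. In $!P$ and in each branch $P_i$ of a case, every assertion must occur under an input or output prefix. Substitution on agents is defined homomorphically, avoiding capture. Frame of an agent: $\mathcal F(\mathbf 0)=\mathcal F(\text{input})=\mathcal F(\text{output})=\mathcal F(\mathbf{case}\ldots)=\mathcal F(!P)=\mathbf 1$, $\mathcal F((\!|\Psi|\!))=\Psi$, $\mathcal F(P\mid Q)=\mathcal F(P)\otimes\mathcal F(Q)$, $\mathcal F((\nu b)P)=(\nu b)\mathcal F(P)$. Actions: output $\overline M(\nu\tilde a)N$ with $\tilde a\subseteq\mathrm n(N)$, input $\underline M N$, and $\tau$; $\mathrm{subj}(\overline M(\nu\tilde a)N)=\mathrm{subj}(\underline MN)=M$; $\mathrm{bn}(\overline M(\nu\tilde a)N)=\tilde a$, otherwise $\emptyset$; $\mathrm n(\tau)=\emptyset$, else $\mathrm n(M)\cup\mathrm n(N)$. Transitions $\Psi\rhd P\xrightarrow{\alpha}P'$ are the least relation closed under (symmetric versions of Com and Par included): In: $\Psi\vdash M\leftrightarrow K$ implies $\Psi\rhd\underline M(\lambda\tilde y)N.P\xrightarrow{\underline K\,N[\tilde y:=\tilde L]}P[\tilde y:=\tilde L]$ for any $\tilde L$. Out: $\Psi\vdash M\leftrightarrow K$ implies $\Psi\rhd\overline MN.P\xrightarrow{\overline KN}P$. Case: $\Psi\rhd P_i\xrightarrow\alpha P'$ and $\Psi\vdash\varphi_i$ imply $\Psi\rhd\mathbf{case}\ \tilde\varphi:\tilde P\xrightarrow\alpha P'$. Com: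 with $\mathcal F(P)=(\nu\tilde b_P)\Psi_P$, $\mathcal F(Q)=(\nu\tilde b_Q)\Psi_Q$, $\tilde b_P\#\Psi,\tilde b_Q,Q,M,P$, $\tilde b_Q\#\Psi,\tilde b_P,P,K,Q$: if $\Psi_Q\otimes\Psi\rhd P\xrightarrow{\overline M(\nu\tilde a)N}P'$, $\Psi_P\otimes\Psi\rhd Q\xrightarrow{\underline KN}Q'$, $\Psi\otimes\Psi_P\otimes\Psi_Q\vdash M\leftrightarrow K$ and $\tilde a\#Q$, then $\Psi\rhd P\mid Q\xrightarrow\tau(\nu\tilde a)(P'\mid Q')$. Par: with $\mathcal F(Q)=(\nu\tilde b_Q)\Psi_Q$, $\tilde b_Q\#\Psi,P,\alpha$: if $\Psi_Q\otimes\Psi\rhd P\xrightarrow\alpha P'$ and $\mathrm{bn}(\alpha)\#Q$ then $\Psi\rhd P\mid Q\xrightarrow\alpha P'\mid Q$. Scope: $\Psi\rhd P\xrightarrow\alpha P'$, $b\#\alpha,\Psi$ imply $\Psi\rhd(\nu b)P\xrightarrow\alpha(\nu b)P'$. Open: $\Psi\rhd P\xrightarrow{\overline M(\nu\tilde a)N}P'$, $b\#\tilde a,\Psi,M$, $b\in\mathrm n(N)$ imply $\Psi\rhd(\nu b)P\xrightarrow{\overline M(\nu\tilde a\cup\{b\})N}P'$. Rep: $\Psi\rhd P\mid !P\xrightarrow\alpha P'$ implies $\Psi\rhd !P\xrightarrow\alpha P'$. $\mathrm{bn}(\alpha)$ binds into the object and derivative; transitions are identified up to alpha-equivalence. *)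

From Stdlib Require Import List Arith.
Import ListNotations.

Definition name := nat.

Definition swap_name (a b c : name) : name :=
  if Nat.eqb c a then b else if Nat.eqb c b then a else c.

Record nominal := Nominal {
  ncar :> Type;
  nswap : name -> name -> ncar -> ncar;
  nswap_id : forall a x, nswap a a x = x;
  nswap_inv : forall a b x, nswap a b (nswap a b x) = x;
  nswap_conj : forall a b c d x,
      nswap a b (nswap c d x)
      = nswap (swap_name a b c) (swap_name a b d) (nswap a b x);
  nfinsupp : forall x, exists L : list name,
      forall a b, ~ In a L -> ~ In b L -> nswap a b x = x
}.
Arguments nswap {n}.

Definition fresh {X : nominal} (a : name) (x : X) : Prop :=
  exists L : list name, forall b, ~ In b L -> nswap a b x = x.

Definition in_supp {X : nominal} (a : name) (x : X) : Prop := ~ fresh a x.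

Fixpoint swaps {X : Type} (sw : name -> name -> X -> X)
    (xs cs : list name) (x : X) : X :=
  match xs, cs with
  | a :: xs', c :: cs' => sw a c (swaps sw xs' cs' x)
  | _, _ => x
  end.

Definition avoids (ds L : list name) : Prop := forall d, In d ds -> ~ In d L.

Definition subst_ok (X Tm : nominal)
    (sub : X -> list name -> list Tm -> X) : Prop :=
  (forall a b x xs Ts,
      nswap a b (sub x xs Ts)
      = sub (nswap a b x) (map (swap_name a b) xs) (map (nswap a b) Ts))
  /\ (forall x xs Ts b,
      NoDup xs -> length xs = length Ts ->
      (forall a, In a xs -> in_supp a x) ->
      (exists t, In t Ts /\ in_supp b t) ->
      in_supp b (sub x xs Ts))
  /\ (forall x xs ys Ts,
      NoDup xs -> length xs = length Ts ->
      NoDup ys -> length ys = length xs ->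
      (forall y, In y ys -> fresh y x /\ ~ In y xs) ->
      sub x xs Ts = sub (swaps nswap ys xs x) ys Ts).

Record psi := MkPsi {
  T : nominal;   (* terms *)
  C : nominal;   (* conditions *)
  A : nominal;   (* assertions *)
  chaneq : T -> T -> C;
  comp : A -> A -> A;
  unit : A;
  entails : A -> C -> Prop;
  substT : T -> list name -> list T -> T;
  substC : C -> list name -> list T -> C;
  substA : A -> list name -> list T -> A;
  chaneq_eqv : forall a b M N,
      nswap a b (chaneq M N) = chaneq (nswap a b M) (nswap a b N);
  comp_eqv : forall a b S S',
      nswap a b (comp S S') = comp (nswap a b S) (nswap a b S');
  unit_eqv : forall a b, nswap a b unit = unit;
  entails_eqv : forall a b S phi,
      entails S phi -> entails (nswap a b S) (nswap a b phi);
  substT_ok : subst_ok T T substT;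
  substC_ok : subst_ok C T substC;
  substA_ok : subst_ok A T substA;
  chan_sym : forall S M N, entails S (chaneq M N) -> entails S (chaneq N M);
  chan_trans : forall S M N L,
      entails S (chaneq M N) -> entails S (chaneq N L) ->
      entails S (chaneq M L);
  (* assertion equivalence laws (S ~ S' := forall phi, S |- phi <-> S' |- phi) *)
  comp_cong : forall S S' S'',
      (forall phi, entails S phi <-> entails S' phi) ->
      forall phi, entails (comp S S'') phi <-> entails (comp S' S'') phi;
  comp_unit : forall S phi, entails (comp S unit) phi <-> entails S phi;
  comp_assoc : forall S S' S'' phi,
      entails (comp (comp S S') S'') phi <-> entails (comp S (comp S' S'')) phi;
  comp_comm : forall S S' phi,
      entails (comp S S') phi <-> entails (comp S' S) phi
}.
Arguments chaneq {p}.
Arguments comp {p}.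
Arguments unit {p}.
Arguments entails {p}.
Arguments substT {p}.
Arguments substC {p}.
Arguments substA {p}.

Inductive agent (p : psi) : Type :=
| Nil : agent p
| Out : T p -> T p -> agent p -> agent p
| Inp : T p -> list name -> T p -> agent p -> agent p      (* M(\x~)N . P *)
| Case : branches p -> agent p
| Nu : name -> agent p -> agent p
| Par : agent p -> agent p -> agent p
| Bang : agent p -> agent p
| Ass : A p -> agent p
with branches (p : psi) : Type :=
| BNil : branches p
| BCons : C p -> agent p -> branches p -> branches p.

Arguments Nil {p}.
Arguments Out {p}.
Arguments Inp {p}.
Arguments Case {p}.
Arguments Nu {p}.
Arguments Par {p}.
Arguments Bang {p}.
Arguments Ass {p}.
Arguments BNil {p}.
Arguments BCons {p}.

Fixpoint swapA {p : psi} (a b : name) (P : agent p) : agent p :=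
  match P with
  | Nil => Nil
  | Out M N Q => Out (nswap a b M) (nswap a b N) (swapA a b Q)
  | Inp M xs N Q =>
      Inp (nswap a b M) (map (swap_name a b) xs) (nswap a b N) (swapA a b Q)
  | Case bs => Case (swapB a b bs)
  | Nu c Q => Nu (swap_name a b c) (swapA a b Q)
  | Par Q R => Par (swapA a b Q) (swapA a b R)
  | Bang Q => Bang (swapA a b Q)
  | Ass s => Ass (nswap a b s)
  end
with swapB {p : psi} (a b : name) (bs : branches p) : branches p :=
  match bs with
  | BNil => BNil
  | BCons phi Q bs' => BCons (nswap a b phi) (swapA a b Q) (swapB a b bs')
  end.

Inductive alpha {p : psi} : agent p -> agent p -> Prop :=
| al_nil : alpha Nil Nil
| al_out : forall M N P P', alpha P P' -> alpha (Out M N P) (Out M N P')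
| al_inp : forall M xs N P ys N' P',
    length xs = length ys ->
    (exists L : list name, forall ds, NoDup ds -> length ds = length xs ->
        avoids ds L ->
        swaps nswap xs ds N = swaps nswap ys ds N' /\
        alpha (swaps swapA xs ds P) (swaps swapA ys ds P')) ->
    alpha (Inp M xs N P) (Inp M ys N' P')
| al_case : forall bs bs', alphaB bs bs' -> alpha (Case bs) (Case bs')
| al_nu : forall a P b Q,
    (exists L : list name, forall c, ~ In c L ->
        alpha (swapA a c P) (swapA b c Q)) ->
    alpha (Nu a P) (Nu b Q)
| al_par : forall P P' Q Q', alpha P P' -> alpha Q Q' -> alpha (Par P Q) (Par P' Q')
| al_bang : forall P P', alpha P P' -> alpha (Bang P) (Bang P')
| al_ass : forall S, alpha (Ass S) (Ass S)
with alphaB {p : psi} : branches p -> branches p -> Prop :=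
| alB_nil : alphaB BNil BNil
| alB_cons : forall phi P P' bs bs',
    alpha P P' -> alphaB bs bs' -> alphaB (BCons phi P bs) (BCons phi P' bs').

Definition freshA {p : psi} (a : name) (P : agent p) : Prop :=
  exists L : list name, forall b, ~ In b L -> alpha (swapA a b P) P.

Fixpoint guarded {p : psi} (P : agent p) : Prop :=
  match P with
  | Nil => True
  | Out _ _ _ => True
  | Inp _ _ _ _ => True
  | Case bs => guardedB bs
  | Nu _ Q => guarded Q
  | Par Q R => guarded Q /\ guarded R
  | Bang Q => guarded Q
  | Ass _ => False
  end
with guardedB {p : psi} (bs : branches p) : Prop :=
  match bs with
  | BNil => True
  | BCons _ Q bs' => guarded Q /\ guardedB bs'
  end.

Fixpoint wf {p : psi} (P : agent p) : Prop :=
  match P with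
  | Nil => True
  | Out _ _ Q => wf Q
  | Inp _ xs N Q => NoDup xs /\ (forall x, In x xs -> in_supp x N) /\ wf Q
  | Case bs => wfB bs
  | Nu _ Q => wf Q
  | Par Q R => wf Q /\ wf R
  | Bang Q => guarded Q /\ wf Q
  | Ass _ => True
  end
with wfB {p : psi} (bs : branches p) : Prop :=
  match bs with
  | BNil => True
  | BCons _ Q bs' => guarded Q /\ wf Q /\ wfB bs'
  end.

Fixpoint in_branches {p : psi} (phi : C p) (P : agent p) (bs : branches p) : Prop :=
  match bs with
  | BNil => False
  | BCons phi' P' bs' => (phi' = phi /\ P' = P) \/ in_branches phi P bs'
  end.

Inductive substAg {p : psi} (ys : list name) (Ls : list (T p))
  : agent p -> agent p -> Prop :=
| sa_nil : substAg ys Ls Nil Nil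
| sa_out : forall M N P P', substAg ys Ls P P' ->
    substAg ys Ls (Out M N P) (Out (substT M ys Ls) (substT N ys Ls) P')
| sa_inp : forall M xs N P P',
    (forall x, In x xs -> ~ In x ys /\ Forall (fun L => fresh x L) Ls) ->
    substAg ys Ls P P' ->
    substAg ys Ls (Inp M xs N P) (Inp (substT M ys Ls) xs (substT N ys Ls) P')
| sa_case : forall bs bs', substB ys Ls bs bs' -> substAg ys Ls (Case bs) (Case bs')
| sa_nu : forall a P P',
    ~ In a ys -> Forall (fun L => fresh a L) Ls ->
    substAg ys Ls P P' -> substAg ys Ls (Nu a P) (Nu a P')
| sa_par : forall P P' Q Q', substAg ys Ls P P' -> substAg ys Ls Q Q' ->
    substAg ys Ls (Par P Q) (Par P' Q')
| sa_bang : forall P P', substAg ys Ls P P' -> substAg ys Ls (Bang P) (Bang P')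
| sa_ass : forall S, substAg ys Ls (Ass S) (Ass (substA S ys Ls))
| sa_alpha : forall P Q R R', alpha P Q -> substAg ys Ls P R -> alpha R R' ->
    substAg ys Ls Q R'
with substB {p : psi} (ys : list name) (Ls : list (T p))
  : branches p -> branches p -> Prop :=
| sb_nil : substB ys Ls BNil BNil
| sb_cons : forall phi P P' bs bs', substAg ys Ls P P' -> substB ys Ls bs bs' ->
    substB ys Ls (BCons phi P bs) (BCons (substC phi ys Ls) P' bs').

Definition frame_alpha {p : psi} (bs : list name) (S : A p)
    (cs : list name) (S' : A p) : Prop :=
  length bs = length cs /\
  exists L : list name, forall ds, NoDup ds -> length ds = length bs ->
    avoids ds L -> swaps nswap bs ds S = swaps nswap cs ds S'.

(* frameR P bs S  :  F(P) = (nu bs) S  (up to alpha-equivalence). *)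
Inductive frameR {p : psi} : agent p -> list name -> A p -> Prop :=
| fr_nil : frameR Nil [] unit
| fr_out : forall M N P, frameR (Out M N P) [] unit
| fr_inp : forall M xs N P, frameR (Inp M xs N P) [] unit
| fr_case : forall bs, frameR (Case bs) [] unit
| fr_bang : forall P, frameR (Bang P) [] unit
| fr_ass : forall S, frameR (Ass S) [] S
| fr_par : forall P Q b1 S1 b2 S2,
    frameR P b1 S1 -> frameR Q b2 S2 ->
    (forall b, In b b1 -> ~ In b b2 /\ fresh b S2) ->
    (forall b, In b b2 -> ~ In b b1 /\ fresh b S1) ->
    frameR (Par P Q) (b1 ++ b2) (comp S1 S2)
| fr_nu : forall a P bs S, frameR P bs S -> frameR (Nu a P) (a :: bs) S
| fr_alpha : forall P bs S cs S', frameR P bs S -> frame_alpha bs S cs S' ->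
    frameR P cs S'
| fr_agent_alpha : forall P Q bs S, alpha P Q -> frameR P bs S -> frameR Q bs S.

Inductive action (p : psi) : Type :=
| AOut : T p -> list name -> T p -> action p    (* 'M (nu a~) N *)
| AIn : T p -> T p -> action p
| ATau : action p.
Arguments AOut {p}.
Arguments AIn {p}.
Arguments ATau {p}.

Definition subj {p : psi} (al : action p) : option (T p) :=
  match al with
  | AOut M _ _ => Some M
  | AIn M _ => Some M
  | ATau => None
  end.

Definition bn {p : psi} (al : action p) : list name :=
  match al with
  | AOut _ xs _ => xs
  | _ => []
  end.

Definition fresh_act {p : psi} (b : name) (al : action p) : Prop :=
  match al with
  | AOut M _ N => fresh b M /\ fresh b N
  | AIn M N => fresh b M /\ fresh b N
  | ATau => True
  end.

(* alpha-equivalence of (action, derivative) pairs: bn(al) binds into the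
   object and the derivative. *)
Definition tr_alpha {p : psi} (al : action p) (P : agent p)
    (be : action p) (Q : agent p) : Prop :=
  match al, be with
  | ATau, ATau => alpha P Q
  | AIn M N, AIn M' N' => M = M' /\ N = N' /\ alpha P Q
  | AOut M xs N, AOut M' ys N' =>
      M = M' /\ length xs = length ys /\
      exists L : list name, forall ds, NoDup ds -> length ds = length xs ->
        avoids ds L ->
        swaps nswap xs ds N = swaps nswap ys ds N' /\
        alpha (swaps swapA xs ds P) (swaps swapA ys ds Q)
  | _, _ => False
  end.

Definition nus {p : psi} (xs : list name) (P : agent p) : agent p :=
  fold_right Nu P xs.

Definition freshL {p : psi} (bs : list name) (S : A p) : Prop :=
  forall b, In b bs -> fresh b S.

Inductive trans {p : psi} : A p -> agent p -> action p -> agent p -> Prop :=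
| t_in : forall S M K ys N P Ls P',
    entails S (chaneq M K) ->
    length Ls = length ys ->
    substAg ys Ls P P' ->
    trans S (Inp M ys N P) (AIn K (substT N ys Ls)) P'
| t_out : forall S M K N P,
    entails S (chaneq M K) ->
    trans S (Out M N P) (AOut K [] N) P
| t_case : forall S bs phi P al P',
    in_branches phi P bs ->
    trans S P al P' -> entails S phi ->
    trans S (Case bs) al P'
| t_com : forall S P Q bP SP bQ SQ M xs N K P' Q',
    frameR P bP SP -> frameR Q bQ SQ ->
    (forall b, In b bP -> fresh b S /\ ~ In b bQ /\ freshA b Q /\ fresh b M /\ freshA b P) ->
    (forall b, In b bQ -> fresh b S /\ ~ In b bP /\ freshA b P /\ fresh b K /\ freshA b Q) ->
    trans (comp SQ S) P (AOut M xs N) P' ->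
    trans (comp SP S) Q (AIn K N) Q' ->
    entails (comp (comp S SP) SQ) (chaneq M K) ->
    (forall a, In a xs -> freshA a Q) ->
    trans S (Par P Q) ATau (nus xs (Par P' Q'))
| t_com_sym : forall S P Q bP SP bQ SQ M xs N K P' Q',
    frameR P bP SP -> frameR Q bQ SQ ->
    (forall b, In b bQ -> fresh b S /\ ~ In b bP /\ freshA b P /\ fresh b M /\ freshA b Q) ->
    (forall b, In b bP -> fresh b S /\ ~ In b bQ /\ freshA b Q /\ fresh b K /\ freshA b P) ->
    trans (comp SP S) Q (AOut M xs N) Q' ->
    trans (comp SQ S) P (AIn K N) P' ->
    entails (comp (comp S SQ) SP) (chaneq M K) ->
    (forall a, In a xs -> freshA a P) ->
    trans S (Par P Q) ATau (nus xs (Par P' Q'))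
| t_par : forall S P Q bQ SQ al P',
    frameR Q bQ SQ ->
    (forall b, In b bQ -> fresh b S /\ freshA b P /\ fresh_act b al) ->
    trans (comp SQ S) P al P' ->
    (forall a, In a (bn al) -> freshA a Q) ->
    trans S (Par P Q) al (Par P' Q)
| t_par_sym : forall S P Q bP SP al Q',
    frameR P bP SP ->
    (forall b, In b bP -> fresh b S /\ freshA b Q /\ fresh_act b al) ->
    trans (comp SP S) Q al Q' ->
    (forall a, In a (bn al) -> freshA a P) ->
    trans S (Par P Q) al (Par P Q')
| t_scope : forall S P al P' b,
    trans S P al P' -> fresh_act b al -> fresh b S ->
    trans S (Nu b P) al (Nu b P')
| t_open : forall S P M xs1 xs2 N P' b,
    trans S P (AOut M (xs1 ++ xs2) N) P' ->
    ~ In b (xs1 ++ xs2) -> fresh b S -> fresh b M -> in_supp b N ->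
    trans S (Nu b P) (AOut M (xs1 ++ b :: xs2) N) P'
| t_rep : forall S P al P',
    trans S (Par P (Bang P)) al P' -> trans S (Bang P) al P'
| t_alpha : forall S P al P' Q be Q',
    trans S P al P' -> alpha P Q -> tr_alpha al P' be Q' ->
    trans S Q be Q'.

(* Instantiate the binders of the frame of an agent P by concrete fresh names
   ds; this gives an assertion [open_frame P ds]. By induction on the
   transition, for every such ds and every B avoided by ds and fresh for P,
   there is a B-fresh M with Psi (x) open_frame P ds |- M <-> subj(alpha).
   Prefixes give their own subject; Case and Rep have frames equivalent to 1
   since their assertions are guarded; under Par the binders of the other
   component's frame are renamed to the names opening them, and under a
   restriction the restricted name is renamed to its opening name. Renaming
   ds back to the binders of the given frame, which are fresh for Psi, the
   subject and B, yields the theorem. *)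

From Stdlib Require Import List Arith Lia.
Import ListNotations.

(** * Names and nominal sets *)

Ltac swap_name_cases := unfold swap_name;
  repeat (match goal with |- context [Nat.eqb ?x ?y] =>
            is_var x; is_var y; destruct (Nat.eqb_spec x y) end; subst; simpl);
  try congruence.

Lemma swap_name_l a b : swap_name a b a = b.
Proof. swap_name_cases. Qed.

Lemma swap_name_r a b : swap_name a b b = a.
Proof. swap_name_cases. Qed.

Lemma swap_name_other a b c : c <> a -> c <> b -> swap_name a b c = c.
Proof. intros. swap_name_cases. Qed.

Lemma swap_name_involutive a b c : swap_name a b (swap_name a b c) = c.
Proof. swap_name_cases. Qed.

Lemma swap_name_conj a b c d e :
  swap_name a b (swap_name c d e)
  = swap_name (swap_name a b c) (swap_name a b d) (swap_name a b e).
Proof. swap_name_cases. Qed.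

Lemma map_swap_name_id a b l : ~ In a l -> ~ In b l -> map (swap_name a b) l = l.
Proof.
  induction l as [|c l IH]; simpl; intros Ha Hb; auto.
  rewrite swap_name_other, IH; intuition.
Qed.

Lemma map_swap_name_involutive a b l : map (swap_name a b) (map (swap_name a b) l) = l.
Proof. rewrite map_map, <- map_id. apply map_ext, swap_name_involutive. Qed.

Lemma map_swap_name_conj a b c d l :
  map (swap_name a b) (map (swap_name c d) l)
  = map (swap_name (swap_name a b c) (swap_name a b d)) (map (swap_name a b) l).
Proof. rewrite !map_map. apply map_ext. intros. apply swap_name_conj. Qed.

Lemma exists_fresh_names (L : list name) n : exists ds, NoDup ds /\ length ds = n /\ avoids ds L.
Proof.
  exists (seq (S (list_max L)) n). repeat split; [apply seq_NoDup|apply length_seq|].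
  intros d Hd Hin. apply in_seq in Hd.
  assert (Hle : Forall (fun k => k <= list_max L) L) by (apply list_max_le; lia).
  rewrite Forall_forall in Hle. specialize (Hle d Hin). lia.
Qed.

Lemma exists_fresh_name (L : list name) : exists e, ~ In e L.
Proof.
  destruct (exists_fresh_names L 1) as [[|e ds] [_ [Hl Hav]]]; [discriminate|].
  exists e. apply Hav. now left.
Qed.

Lemma split_names {Y : Type} (ds : list Y) n1 n2 : length ds = n1 + n2 ->
  exists ds1 ds2, ds = ds1 ++ ds2 /\ length ds1 = n1 /\ length ds2 = n2.
Proof.
  intros Hl. exists (firstn n1 ds), (skipn n1 ds).
  rewrite firstn_skipn, length_firstn, length_skipn. repeat split; lia.
Qed.

Lemma NoDup_app_not_in {Y : Type} (l1 l2 : list Y) x : NoDup (l1 ++ l2) -> In x l1 -> ~ In x l2.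
Proof.
  induction l1 as [|y l1 IH]; simpl; intros H Hin; [contradiction|]. inversion H; subst.
  destruct Hin as [->|Hin]; auto. intro H'. apply H2, in_app_iff. auto.
Qed.

Lemma NoDup_app_swap {Y : Type} (l1 l2 : list Y) : NoDup (l1 ++ l2) -> NoDup (l2 ++ l1).
Proof.
  intros H. apply NoDup_app; [eapply NoDup_app_remove_l|eapply NoDup_app_remove_r|]; eauto.
  intros x Hx Hx'. exact (NoDup_app_not_in _ _ _ H Hx' Hx).
Qed.

Lemma avoids_app_l ds L1 L2 : avoids ds (L1 ++ L2) -> avoids ds L1.
Proof. intros H d Hd Hin. apply (H d Hd), in_app_iff. auto. Qed.

Lemma avoids_app_r ds L1 L2 : avoids ds (L1 ++ L2) -> avoids ds L2.
Proof. intros H d Hd Hin. apply (H d Hd), in_app_iff. auto. Qed.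

Lemma avoids_app_names ds1 ds2 L : avoids (ds1 ++ ds2) L -> avoids ds1 L /\ avoids ds2 L.
Proof. intros H. split; intros d Hd; apply H, in_app_iff; auto. Qed.

Lemma avoids_incl ds ds' L : incl ds' ds -> avoids ds L -> avoids ds' L.
Proof. intros Hi H d Hd. apply H, Hi, Hd. Qed.

Ltac avoids_contra Hav :=
  let Hin := fresh "Hin" in intro Hin;
  match type of Hin with In ?d _ => apply (Hav d) end;
  simpl; rewrite ?in_app_iff; simpl; tauto.

Lemma avoids_app_swap ds1 ds2 L : avoids (ds1 ++ ds2) L -> avoids (ds2 ++ ds1) L.
Proof. apply avoids_incl. intros d. rewrite !in_app_iff. tauto. Qed.

Lemma swaps_app {Y : Type} (sw : name -> name -> Y -> Y) b1 b2 d1 d2 y :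
  length b1 = length d1 ->
  swaps sw (b1 ++ b2) (d1 ++ d2) y = swaps sw b1 d1 (swaps sw b2 d2 y).
Proof.
  revert d1; induction b1 as [|b b1 IH]; intros [|d d1] H; simpl in *; try discriminate; auto.
  rewrite IH; auto.
Qed.

Section Nominal.
Variable X : nominal.
Implicit Types x y : X.

Lemma nswap_comm a b x : nswap a b x = nswap b a x.
Proof.
  assert (H : nswap a b (nswap a b x) = nswap b a (nswap a b x)).
  { rewrite (nswap_conj X a b a b x), swap_name_l, swap_name_r. reflexivity. }
  rewrite nswap_inv in H. rewrite <- (nswap_inv X b a (nswap a b x)), <- H. reflexivity.
Qed.

Lemma fresh_cofinite x : exists L, forall a, ~ In a L -> fresh a x.
Proof.
  destruct (nfinsupp X x) as [L HL]. exists L. intros a Ha. exists L. auto.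
Qed.

Lemma fresh_nswap_other a b c x : fresh a x -> a <> b -> a <> c -> fresh a (nswap b c x).
Proof.
  intros [L HL] Hb Hc. exists (b :: c :: L). intros d Hd. simpl in Hd.
  rewrite nswap_conj, !swap_name_other by (intuition; subst; auto).
  rewrite HL by tauto. reflexivity.
Qed.

Lemma fresh_nswap_self a b x : fresh b x -> fresh a (nswap a b x).
Proof.
  intros [L HL]. exists (a :: b :: L). intros d Hd. simpl in Hd.
  assert (E : nswap a b x = nswap a b (nswap b d x)) by (rewrite HL; tauto).
  symmetry. rewrite E at 1.
  rewrite (nswap_conj X a b b d), swap_name_r, (swap_name_other a b d) by (intuition; subst; auto).
  reflexivity.
Qed.

Lemma nswap_fresh a b x : fresh a x -> fresh b x -> nswap a b x = x.
Proof.
  intros [La HA] [Lb HB].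
  destruct (Nat.eq_dec a b) as [->|Hab]; [apply nswap_id|].
  destruct (exists_fresh_name (a :: b :: La ++ Lb)) as [e He].
  simpl in He. rewrite in_app_iff in He.
  assert (E : nswap a e (nswap b e (nswap a e x)) = nswap b a x).
  { rewrite nswap_conj, swap_name_other, swap_name_r, nswap_inv by (intuition; subst; auto).
    reflexivity. }
  rewrite (HA e), (HB e), (HA e) in E by tauto. rewrite nswap_comm. auto.
Qed.

Lemma fresh_of_nswap_fixed a c x : a <> c -> nswap a c x = x -> fresh c x -> fresh a x.
Proof.
  intros Hac E [L HL]. exists (a :: c :: L). intros b Hb. simpl in Hb.
  assert (E2 : nswap c b (nswap a c (nswap c b x)) = nswap a b x).
  { rewrite nswap_conj, swap_name_other, swap_name_l, nswap_inv by (intuition; subst; auto).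
    reflexivity. }
  rewrite HL, E, HL in E2 by tauto. auto.
Qed.

Lemma nswap_rename a c d x :
  fresh c x -> fresh d x -> a <> c -> a <> d -> c <> d ->
  nswap a d x = nswap c d (nswap a c x).
Proof.
  intros Hc Hd Hac Had Hcd.
  rewrite nswap_conj, swap_name_other, swap_name_l, (nswap_fresh c d x) by auto.
  reflexivity.
Qed.

Lemma fresh_swaps bs ds y a :
  fresh a y -> ~ In a ds -> (forall d, In d ds -> fresh d y) -> NoDup ds ->
  fresh a (swaps nswap bs ds y).
Proof.
  revert ds a; induction bs as [|b bs IH]; intros [|d ds] a Ha Hads Hds Hnd; simpl; auto.
  inversion Hnd; subst. simpl in *.
  destruct (Nat.eq_dec a b) as [->|Hab].
  - apply fresh_nswap_self, IH; auto.
  - apply fresh_nswap_other; auto.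
Qed.

Lemma swaps_fresh bs ds x :
  (forall b, In b bs -> fresh b x) -> (forall d, In d ds -> fresh d x) ->
  swaps nswap bs ds x = x.
Proof.
  revert ds; induction bs as [|b bs IH]; intros [|d ds] Hb Hd; simpl; auto.
  rewrite IH by (intros; simpl in *; auto). apply nswap_fresh; simpl in *; auto.
Qed.

Lemma nswap_swaps a b xs ds x :
  nswap a b (swaps nswap xs ds x)
  = swaps nswap (map (swap_name a b) xs) (map (swap_name a b) ds) (nswap a b x).
Proof.
  revert ds; induction xs as [|y xs IH]; intros [|d ds]; simpl; auto.
  rewrite nswap_conj, IH. reflexivity.
Qed.

Lemma swaps_app_disjoint b1 b2 d1 d2 x : length b1 = length d1 -> NoDup d2 ->
  (forall b, In b b1 -> fresh b x /\ ~ In b d2) ->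
  (forall d, In d d1 -> fresh d x /\ ~ In d d2) ->
  (forall d, In d d2 -> fresh d x) ->
  swaps nswap (b1 ++ b2) (d1 ++ d2) x = swaps nswap b2 d2 x.
Proof.
  intros Hl Hnd Hb1 Hd1 Hd2. rewrite swaps_app by auto.
  apply swaps_fresh; intros a Ha; apply fresh_swaps; auto;
    [apply Hb1|apply Hb1|apply Hd1|apply Hd1]; auto.
Qed.

Fixpoint unswaps (xs cs : list name) (x : X) : X :=
  match xs, cs with
  | a :: xs', c :: cs' => unswaps xs' cs' (nswap a c x)
  | _, _ => x
  end.

Lemma unswaps_swaps bs ds x : unswaps bs ds (swaps nswap bs ds x) = x.
Proof.
  revert ds x; induction bs as [|b bs IH]; intros [|d ds] x; simpl; auto.
  rewrite nswap_inv. apply IH.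
Qed.

Lemma unswaps_fresh bs ds x :
  (forall b, In b bs -> fresh b x) -> (forall d, In d ds -> fresh d x) -> unswaps bs ds x = x.
Proof.
  revert ds x; induction bs as [|b bs IH]; intros [|d ds] x Hb Hd; simpl; auto.
  rewrite nswap_fresh by (simpl in *; auto). apply IH; intros; simpl in *; auto.
Qed.

Lemma fresh_unswaps bs ds x a :
  ~ In a bs -> ~ In a ds -> fresh a x -> fresh a (unswaps bs ds x).
Proof.
  revert ds x; induction bs as [|b bs IH]; intros [|d ds] x H1 H2 H3; simpl in *; auto.
  apply IH; auto. apply fresh_nswap_other; auto.
Qed.

End Nominal.

Arguments unswaps {X}.

Definition equivariant2 {X Y Z : nominal} (f : X -> Y -> Z) : Prop :=
  forall a b x y, nswap a b (f x y) = f (nswap a b x) (nswap a b y).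

Section Equivariant2.
Variables X Y Z : nominal.
Variable f : X -> Y -> Z.
Hypothesis f_eqv : equivariant2 f.

Lemma fresh_equivariant2 a x y : fresh a x -> fresh a y -> fresh a (f x y).
Proof.
  intros [L1 H1] [L2 H2]. exists (L1 ++ L2). intros b Hb. rewrite in_app_iff in Hb.
  rewrite f_eqv, H1, H2; tauto.
Qed.

Lemma swaps_equivariant2 bs ds x y :
  swaps nswap bs ds (f x y) = f (swaps nswap bs ds x) (swaps nswap bs ds y).
Proof.
  revert ds; induction bs; intros [|d ds]; simpl; auto. rewrite IHbs, f_eqv. reflexivity.
Qed.

Lemma unswaps_equivariant2 bs ds x y :
  unswaps bs ds (f x y) = f (unswaps bs ds x) (unswaps bs ds y).
Proof.
  revert ds x y; induction bs; intros [|d ds] x y; simpl; auto. rewrite f_eqv, IHbs. reflexivity.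
Qed.

End Equivariant2.

Section PsiCalculus.
Variable p : psi.
Implicit Types (S : A p) (M K : T p) (P Q R : agent p) (bs : branches p).

Lemma comp_equivariant : equivariant2 (@comp p).
Proof. exact (@comp_eqv p). Qed.

Lemma chaneq_equivariant : equivariant2 (@chaneq p).
Proof. exact (@chaneq_eqv p). Qed.

Lemma fresh_unit a : fresh a (@unit p).
Proof. exists []. intros. apply unit_eqv. Qed.

Lemma entails_swaps xs ds S phi :
  entails S phi -> entails (swaps nswap xs ds S) (swaps nswap xs ds phi).
Proof. revert ds; induction xs; intros [|d ds] H; simpl; auto. apply entails_eqv. auto. Qed.

Lemma entails_unswaps xs ds S phi :
  entails S phi -> entails (unswaps xs ds S) (unswaps xs ds phi).
Proof.
  revert ds S phi; induction xs; intros [|d ds] S phi H; simpl; auto.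
  apply IHxs, entails_eqv, H.
Qed.

Definition aeq S S' : Prop := forall phi, entails S phi <-> entails S' phi.

Lemma aeq_entails S S' phi : aeq S S' -> entails S phi -> entails S' phi.
Proof. intros H. apply H. Qed.

Lemma aeq_sym S S' : aeq S S' -> aeq S' S.
Proof. intros H phi. symmetry. apply H. Qed.

Lemma aeq_trans S1 S2 S3 : aeq S1 S2 -> aeq S2 S3 -> aeq S1 S3.
Proof. intros H1 H2 phi. rewrite (H1 phi). apply H2. Qed.

Lemma aeq_comm S S' : aeq (comp S S') (comp S' S).
Proof. intro. apply comp_comm. Qed.

Lemma aeq_assoc S S' S'' : aeq (comp (comp S S') S'') (comp S (comp S' S'')).
Proof. intro. apply comp_assoc. Qed.

Lemma aeq_unit S : aeq (comp S unit) S.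
Proof. intro. apply comp_unit. Qed.

Lemma aeq_comp_l S S' S'' : aeq S S' -> aeq (comp S S'') (comp S' S'').
Proof. intros H phi. apply comp_cong, H. Qed.

Lemma aeq_comp_r S S' S'' : aeq S S' -> aeq (comp S'' S) (comp S'' S').
Proof.
  intros H. eapply aeq_trans; [apply aeq_comm|].
  eapply aeq_trans; [apply aeq_comp_l, H|]. apply aeq_comm.
Qed.

Lemma aeq_nswap a b S S' : aeq S S' -> aeq (nswap a b S) (nswap a b S').
Proof.
  intros H phi. split; intro E; rewrite <- (nswap_inv _ a b phi); apply entails_eqv, H;
    [rewrite <- (nswap_inv _ a b S)|rewrite <- (nswap_inv _ a b S')]; apply entails_eqv, E.
Qed.

(** * Alpha-equivalence of agents *)

Scheme agent_mut := Induction for agent Sort Prop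
  with branches_mut := Induction for branches Sort Prop.

Lemma swapA_involutive a b P : swapA a b (swapA a b P) = P.
Proof.
  induction P using agent_mut with (P0 := fun bs => swapB a b (swapB a b bs) = bs); simpl;
    rewrite ?nswap_inv, ?swap_name_involutive, ?map_swap_name_involutive; congruence.
Qed.

Lemma swapA_conj a b c d P :
  swapA a b (swapA c d P) = swapA (swap_name a b c) (swap_name a b d) (swapA a b P).
Proof.
  induction P using agent_mut with (P0 := fun bs =>
    swapB a b (swapB c d bs) = swapB (swap_name a b c) (swap_name a b d) (swapB a b bs)); simpl;
    rewrite ?(nswap_conj _ a b c d), ?(swap_name_conj a b c d), ?(map_swap_name_conj a b c d);
    congruence.
Qed.

Lemma swapA_swaps a b xs ds P :
  swapA a b (swaps swapA xs ds P)
  = swaps swapA (map (swap_name a b) xs) (map (swap_name a b) ds) (swapA a b P).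
Proof.
  revert ds; induction xs as [|y xs IH]; intros [|d ds]; simpl; auto.
  rewrite swapA_conj, IH. reflexivity.
Qed.

Lemma swapA_cofinite_fixed P : exists L, forall a b, ~ In a L -> ~ In b L -> swapA a b P = P.
Proof.
  induction P using agent_mut with (P0 := fun bs =>
    exists L, forall a b, ~ In a L -> ~ In b L -> swapB a b bs = bs).
  - exists []. auto.
  - destruct (nfinsupp _ n) as [L1 H1], (nfinsupp _ n0) as [L2 H2], IHP as [L3 H3].
    exists (L1 ++ L2 ++ L3). intros a b Ha Hb. rewrite !in_app_iff in *. simpl.
    rewrite H1, H2, H3; tauto.
  - destruct (nfinsupp _ n) as [L1 H1], (nfinsupp _ n0) as [L2 H2], IHP as [L3 H3].
    exists (L1 ++ L2 ++ L3 ++ l). intros a b Ha Hb. rewrite !in_app_iff in *. simpl.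
    rewrite H1, H2, H3, map_swap_name_id; tauto.
  - destruct IHP as [L H]. exists L. intros. simpl. rewrite H; auto.
  - destruct IHP as [L H]. exists (n :: L). intros a b Ha Hb. simpl in *.
    rewrite H, swap_name_other; intuition.
  - destruct IHP1 as [L1 H1], IHP2 as [L2 H2]. exists (L1 ++ L2). intros a b Ha Hb.
    rewrite !in_app_iff in *. simpl. rewrite H1, H2; tauto.
  - destruct IHP as [L H]. exists L. intros. simpl. rewrite H; auto.
  - destruct (nfinsupp _ n) as [L H]. exists L. intros. simpl. rewrite H; auto.
  - exists []. auto.
  - destruct (nfinsupp _ n) as [L1 H1], IHP as [L2 H2], IHP0 as [L3 H3].
    exists (L1 ++ L2 ++ L3). intros a0 b0 Ha Hb. rewrite !in_app_iff in *. simpl.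
    rewrite H1, H2, H3; tauto.
Qed.

Lemma alpha_ind_strong (Pr : agent p -> agent p -> Prop) (PrB : branches p -> branches p -> Prop)
  (h_nil : Pr Nil Nil)
  (h_out : forall M N P P', alpha P P' -> Pr P P' -> Pr (Out M N P) (Out M N P'))
  (h_inp : forall M xs N P ys N' P', length xs = length ys ->
     (exists L : list name, forall ds, NoDup ds -> length ds = length xs -> avoids ds L ->
        swaps nswap xs ds N = swaps nswap ys ds N' /\
        alpha (swaps swapA xs ds P) (swaps swapA ys ds P') /\
        Pr (swaps swapA xs ds P) (swaps swapA ys ds P')) ->
     Pr (Inp M xs N P) (Inp M ys N' P'))
  (h_case : forall bs bs', alphaB bs bs' -> PrB bs bs' -> Pr (Case bs) (Case bs'))
  (h_nu : forall a P b Q, (exists L : list name, forall c, ~ In c L ->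
        alpha (swapA a c P) (swapA b c Q) /\ Pr (swapA a c P) (swapA b c Q)) ->
     Pr (Nu a P) (Nu b Q))
  (h_par : forall P P' Q Q', alpha P P' -> Pr P P' -> alpha Q Q' -> Pr Q Q' ->
     Pr (Par P Q) (Par P' Q'))
  (h_bang : forall P P', alpha P P' -> Pr P P' -> Pr (Bang P) (Bang P'))
  (h_ass : forall S, Pr (Ass S) (Ass S))
  (hb_nil : PrB BNil BNil)
  (hb_cons : forall phi P P' bs bs', alpha P P' -> Pr P P' -> alphaB bs bs' -> PrB bs bs' ->
     PrB (BCons phi P bs) (BCons phi P' bs')) :
  forall P Q, alpha P Q -> Pr P Q.
Proof.
  fix IH 3 with (IHB (bs bs' : branches p) (H : alphaB bs bs') {struct H} : PrB bs bs').
  - intros P Q H. destruct H.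
    + apply h_nil.
    + apply h_out; auto.
    + apply h_inp; auto. destruct H0 as [L HL]. exists L. intros ds H1 H2 H3.
      destruct (HL ds H1 H2 H3) as [E1 E2]. auto.
    + apply h_case; auto.
    + apply h_nu. destruct H as [L HL]. exists L. intros c Hc. auto.
    + apply h_par; auto.
    + apply h_bang; auto.
    + apply h_ass.
  - intros bs bs' H. destruct H.
    + apply hb_nil.
    + apply hb_cons; auto.
Qed.

Ltac push_swaps := intros xs ds; revert ds;
  induction xs; intros [|d ds]; simpl; rewrite ?map_id; try reflexivity;
  match goal with IH : forall _, _ |- _ => rewrite IH end; simpl; rewrite ?map_map; reflexivity.

Lemma swaps_Nil : forall xs ds, swaps swapA xs ds (@Nil p) = Nil.
Proof. push_swaps. Qed.
Lemma swaps_Out M N P : forall xs ds, swaps swapA xs ds (Out M N P)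
  = Out (swaps nswap xs ds M) (swaps nswap xs ds N) (swaps swapA xs ds P).
Proof. push_swaps. Qed.
Lemma swaps_Inp M ys N P : forall xs ds, swaps swapA xs ds (Inp M ys N P)
  = Inp (swaps nswap xs ds M) (map (swaps swap_name xs ds) ys) (swaps nswap xs ds N)
        (swaps swapA xs ds P).
Proof. push_swaps. Qed.
Lemma swaps_Case bs : forall xs ds, swaps swapA xs ds (Case bs) = Case (swaps swapB xs ds bs).
Proof. push_swaps. Qed.
Lemma swaps_Nu a P : forall xs ds,
  swaps swapA xs ds (Nu a P) = Nu (swaps swap_name xs ds a) (swaps swapA xs ds P).
Proof. push_swaps. Qed.
Lemma swaps_Par P Q : forall xs ds,
  swaps swapA xs ds (Par P Q) = Par (swaps swapA xs ds P) (swaps swapA xs ds Q).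
Proof. push_swaps. Qed.
Lemma swaps_Bang P : forall xs ds, swaps swapA xs ds (Bang P) = Bang (swaps swapA xs ds P).
Proof. push_swaps. Qed.
Lemma swaps_Ass S : forall xs ds, swaps swapA xs ds (Ass S) = Ass (swaps nswap xs ds S).
Proof. push_swaps. Qed.
Lemma swaps_BNil : forall xs ds, swaps swapB xs ds (@BNil p) = BNil.
Proof. push_swaps. Qed.
Lemma swaps_BCons phi P bs : forall xs ds, swaps swapB xs ds (BCons phi P bs)
  = BCons (swaps nswap xs ds phi) (swaps swapA xs ds P) (swaps swapB xs ds bs).
Proof. push_swaps. Qed.

(* Reflexivity must hold for all renamings of [P] at once, since [al_nu] and
   [al_inp] compare renamed bodies. *)
Lemma alpha_refl_swaps P : forall xs ds, alpha (swaps swapA xs ds P) (swaps swapA xs ds P).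
Proof.
  induction P using agent_mut with (P0 := fun bs =>
    forall xs ds, alphaB (swaps swapB xs ds bs) (swaps swapB xs ds bs)); intros xs ds.
  - rewrite swaps_Nil. constructor.
  - rewrite swaps_Out. constructor. auto.
  - rewrite swaps_Inp. constructor; auto. exists []. intros es _ Hl _.
    rewrite length_map in Hl. split; [reflexivity|].
    rewrite <- swaps_app by (rewrite length_map; auto). apply IHP.
  - rewrite swaps_Case. constructor. auto.
  - rewrite swaps_Nu. constructor. exists []. intros c _.
    exact (IHP (swaps swap_name xs ds n :: xs) (c :: ds)).
  - rewrite swaps_Par. constructor; auto.
  - rewrite swaps_Bang. constructor; auto.
  - rewrite swaps_Ass. constructor.
  - rewrite swaps_BNil. constructor.
  - rewrite swaps_BCons. constructor; auto.
Qed.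

Lemma alpha_refl P : alpha P P.
Proof. exact (alpha_refl_swaps P [] []). Qed.

Lemma alpha_sym P Q : alpha P Q -> alpha Q P.
Proof.
  apply (alpha_ind_strong (fun P Q => alpha Q P) (fun bs bs' => alphaB bs' bs)); intros.
  all: try (constructor; assumption).
  - apply al_inp; [congruence|]. destruct H0 as [L HL]. exists L. intros ds H1 H2 H3.
    rewrite <- H in H2. destruct (HL ds H1 H2 H3) as [E1 [E2 E3]]. auto.
  - apply al_nu. destruct H as [L HL]. exists L. intros c Hc. apply HL; auto.
Qed.

Lemma alpha_swapA P Q : alpha P Q -> forall x y, alpha (swapA x y P) (swapA x y Q).
Proof.
  apply (alpha_ind_strong (fun P Q => forall x y, alpha (swapA x y P) (swapA x y Q))
                            (fun bs bs' => forall x y, alphaB (swapB x y bs) (swapB x y bs'))).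
  all: try (intros; simpl; constructor; auto; fail).
  - intros M xs N P0 ys N' P0' Hlen [L HL] x y; simpl.
    apply al_inp; [rewrite !length_map; auto|]. exists (x :: y :: L).
    intros ds Hnd Hl Hav. rewrite length_map in Hl.
    assert (Hxy : map (swap_name x y) ds = ds).
    { apply map_swap_name_id; intro Hin; apply (Hav _ Hin); simpl; auto. }
    destruct (HL ds Hnd Hl (avoids_app_r ds [x; y] L Hav)) as [E1 [_ E3]].
    (* [ds] avoids [x] and [y], so it is its own image under (x y). *)
    rewrite <- Hxy at 1 2 3 4.
    rewrite <- !nswap_swaps, <- !swapA_swaps, E1. split; [reflexivity|apply E3].
  - intros a P0 b Q0 [L HL] x y; simpl. apply al_nu. exists (x :: y :: L).
    intros c Hc. simpl in Hc. destruct (HL c ltac:(tauto)) as [_ H].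
    specialize (H x y). rewrite !(swapA_conj x y _ c), (swap_name_other x y c) in H
      by (intro; subst; tauto).
    exact H.
Qed.

Lemma alpha_trans P Q R : alpha P Q -> alpha Q R -> alpha P R.
Proof.
  intros H; revert P Q H R.
  apply (alpha_ind_strong (fun P Q => forall R, alpha Q R -> alpha P R)
                            (fun bs bs' => forall bs'', alphaB bs' bs'' -> alphaB bs bs'')).
  all: try (intros; match goal with H : _ |- _ => inversion H; subst end; constructor; auto; fail).
  - intros M xs N P0 ys N' P0' Hlen [L1 H1] R H. inversion H; subst.
    match goal with H : exists L, _ |- _ => destruct H as [L2 H2] end.
    apply al_inp; [congruence|]. exists (L1 ++ L2). intros ds Hnd Hl Hav.
    destruct (H1 ds Hnd Hl (avoids_app_l _ _ _ Hav)) as [E1 [_ E3]].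
    destruct (H2 ds Hnd ltac:(congruence) (avoids_app_r _ _ _ Hav)) as [F1 F2].
    split; [congruence|]. apply E3, F2.
  - intros a P0 b Q0 [L1 H1] R H. inversion H; subst. apply al_nu.
    match goal with H : exists L, _ |- _ => destruct H as [L2 H2] end.
    exists (L1 ++ L2). intros c Hc. rewrite in_app_iff in Hc.
    apply (proj2 (H1 c ltac:(tauto))), H2. tauto.
Qed.

Lemma freshA_cofinite P : exists L, forall a, ~ In a L -> freshA a P.
Proof.
  destruct (swapA_cofinite_fixed P) as [L HL]. exists L. intros a Ha. exists L.
  intros b Hb. rewrite HL by auto. apply alpha_refl.
Qed.

Lemma freshA_alpha x P Q : alpha P Q -> freshA x Q -> freshA x P.
Proof.
  intros H [L HL]. exists L. intros c Hc.
  eapply alpha_trans; [apply alpha_swapA, H|].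
  eapply alpha_trans; [apply HL, Hc|]. apply alpha_sym, H.
Qed.

Ltac freshA_inversion :=
  let L := fresh "L" in let HL := fresh "HL" in
  intros [L HL]; exists L; intros ? Hb; specialize (HL _ Hb); simpl in HL;
  inversion HL; first [assumption | congruence].

Lemma freshA_Inp_subject x M xs N P : freshA x (Inp M xs N P) -> fresh x M.
Proof. freshA_inversion. Qed.

Lemma freshA_Out_subject x M N P : freshA x (Out M N P) -> fresh x M.
Proof. freshA_inversion. Qed.

Lemma freshA_Par_l x P Q : freshA x (Par P Q) -> freshA x P.
Proof. freshA_inversion. Qed.

Lemma freshA_Par_r x P Q : freshA x (Par P Q) -> freshA x Q.
Proof. freshA_inversion. Qed.

Lemma freshA_Bang x P : freshA x (Bang P) -> freshA x P.
Proof. freshA_inversion. Qed.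

Lemma freshA_Par x P Q : freshA x P -> freshA x Q -> freshA x (Par P Q).
Proof.
  intros [L1 H1] [L2 H2]. exists (L1 ++ L2). intros b Hb. rewrite in_app_iff in Hb.
  apply al_par; [apply H1|apply H2]; tauto.
Qed.

Lemma freshA_Case_branch x bs phi P : freshA x (Case bs) -> in_branches phi P bs -> freshA x P.
Proof.
  intros [L HL] Hin. exists L. intros b Hb. specialize (HL b Hb). inversion HL; subst.
  clear HL Hb. induction bs as [|phi' P' bs IH]; simpl in *; [contradiction|].
  match goal with H : alphaB _ _ |- _ => inversion H; subst end.
  destruct Hin as [[-> ->]|Hin]; auto.
Qed.

Lemma freshA_Nu x b P : freshA x (Nu b P) -> x <> b -> freshA x P.
Proof.
  intros [L HL] Hxb. exists (b :: L). intros c Hc. simpl in Hc.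
  specialize (HL c ltac:(tauto)). simpl in HL.
  rewrite swap_name_other in HL by (intro; subst; tauto).
  inversion HL; subst. match goal with H : exists L, _ |- _ => destruct H as [L' H'] end.
  destruct (exists_fresh_name L') as [e He].
  pose proof (alpha_swapA _ _ (H' e He) b e) as H''. rewrite !swapA_involutive in H''. exact H''.
Qed.

(** * Opened frames *)

(* The part of [wf] that the transition proof needs; unlike the conditions on
   input patterns it is easily seen to be invariant under alpha-equivalence. *)
Fixpoint bodies_guarded P : Prop :=
  match P with
  | Case bs => bodies_guardedB bs
  | Nu _ Q => bodies_guarded Q
  | Par Q R => bodies_guarded Q /\ bodies_guarded R
  | Bang Q => guarded Q /\ bodies_guarded Q
  | _ => True
  end
with bodies_guardedB bs : Prop :=
  match bs with
  | BNil => True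
  | BCons _ Q bs' => (guarded Q /\ bodies_guarded Q) /\ bodies_guardedB bs'
  end.

Lemma wf_bodies_guarded P : wf P -> bodies_guarded P.
Proof.
  induction P using agent_mut with (P0 := fun bs => wfB bs -> bodies_guardedB bs); simpl; tauto.
Qed.

Lemma guarded_swapA x y P : guarded (swapA x y P) <-> guarded P.
Proof.
  induction P using agent_mut with (P0 := fun bs => guardedB (swapB x y bs) <-> guardedB bs);
    simpl; tauto.
Qed.

Lemma bodies_guarded_swapA x y P : bodies_guarded (swapA x y P) <-> bodies_guarded P.
Proof.
  induction P using agent_mut with (P0 := fun bs =>
    bodies_guardedB (swapB x y bs) <-> bodies_guardedB bs); simpl; rewrite ?guarded_swapA; tauto.
Qed.

Lemma alpha_guarded P Q : alpha P Q ->
  (guarded P -> guarded Q) /\ (bodies_guarded P -> bodies_guarded Q).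
Proof.
  apply (alpha_ind_strong
    (fun P Q => (guarded P -> guarded Q) /\ (bodies_guarded P -> bodies_guarded Q))
    (fun bs bs' => (guardedB bs -> guardedB bs') /\ (bodies_guardedB bs -> bodies_guardedB bs')));
    simpl; try tauto.
  intros a P0 b Q0 [L HL]. destruct (exists_fresh_name L) as [c Hc].
  destruct (HL c Hc) as [_ H]. rewrite !guarded_swapA, !bodies_guarded_swapA in H. exact H.
Qed.

Fixpoint nbinders P : nat :=
  match P with
  | Nu _ Q => S (nbinders Q)
  | Par Q R => nbinders Q + nbinders R
  | _ => 0
  end.

(* [open_frame P ds] is the assertion of the frame of [P] with its binders
   instantiated, from left to right, by the names [ds] (as many binders as
   [ds] provides; it is used with [length ds = nbinders P]). *)
Fixpoint open_frame P (ds : list name) : A p :=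
  match P with
  | Nu a Q =>
      match ds with
      | d :: ds' => nswap a d (open_frame Q ds')
      | [] => open_frame Q []
      end
  | Par Q R => comp (open_frame Q (firstn (nbinders Q) ds)) (open_frame R (skipn (nbinders Q) ds))
  | Ass s => s
  | _ => unit
  end.

Lemma open_frame_Par P Q ds1 ds2 : length ds1 = nbinders P ->
  open_frame (Par P Q) (ds1 ++ ds2) = comp (open_frame P ds1) (open_frame Q ds2).
Proof.
  intros Hl. simpl. rewrite <- Hl, firstn_app, skipn_app, Nat.sub_diag, firstn_all, skipn_all.
  simpl. rewrite app_nil_r. reflexivity.
Qed.

Lemma nbinders_swapA x y P : nbinders (swapA x y P) = nbinders P.
Proof. induction P; simpl; auto. Qed.

Lemma nswap_open_frame x y P : forall ds,
  nswap x y (open_frame P ds) = open_frame (swapA x y P) (map (swap_name x y) ds).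
Proof.
  induction P; intros ds; simpl; try apply unit_eqv; auto.
  - destruct ds as [|d ds]; simpl; auto. rewrite nswap_conj, IHP. reflexivity.
  - rewrite comp_eqv, IHP1, IHP2, nbinders_swapA, firstn_map, skipn_map. reflexivity.
Qed.

Lemma nswap_open_frame_avoid x y P ds : ~ In x ds -> ~ In y ds ->
  nswap x y (open_frame P ds) = open_frame (swapA x y P) ds.
Proof. intros Hx Hy. rewrite nswap_open_frame, map_swap_name_id; auto. Qed.

Lemma fresh_open_frame_cofinite P :
  exists L, forall x ds, ~ In x L -> ~ In x ds -> fresh x (open_frame P ds).
Proof.
  induction P; simpl; try (exists []; intros; apply fresh_unit).
  - destruct IHP as [L HL]. exists (n :: L). intros x [|d ds] H1 H2; simpl in *.
    + apply HL; auto.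
    + apply fresh_nswap_other; auto.
  - destruct IHP1 as [L1 H1], IHP2 as [L2 H2]. exists (L1 ++ L2). intros x ds Hx Hd.
    rewrite in_app_iff in Hx. rewrite <- (firstn_skipn (nbinders P1) ds), in_app_iff in Hd.
    apply (fresh_equivariant2 _ _ _ _ comp_equivariant); [apply H1|apply H2]; tauto.
  - destruct (fresh_cofinite _ n) as [L HL]. exists L. auto.
Qed.

Lemma guarded_open_frame P ds : guarded P -> aeq (open_frame P ds) unit.
Proof.
  revert ds; induction P; simpl; intros ds Hg; try contradiction; try (intro; reflexivity).
  - destruct ds as [|d ds]; auto. rewrite <- (unit_eqv p n d). apply aeq_nswap; auto.
  - destruct Hg as [H1 H2]. eapply aeq_trans; [apply aeq_comp_l, IHP1, H1|].
    eapply aeq_trans; [apply aeq_comm|]. eapply aeq_trans; [apply aeq_unit|]. apply IHP2, H2.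
Qed.

Lemma open_frame_alpha P Q : alpha P Q ->
  nbinders P = nbinders Q /\
  exists L, forall ds, NoDup ds -> length ds = nbinders P -> avoids ds L ->
    open_frame P ds = open_frame Q ds.
Proof.
  apply (alpha_ind_strong (fun P Q => nbinders P = nbinders Q /\
           exists L, forall ds, NoDup ds -> length ds = nbinders P -> avoids ds L ->
             open_frame P ds = open_frame Q ds) (fun _ _ => True)); auto;
    try (split; [reflexivity|exists []; auto]).
  - intros a P0 b Q0 [L0 HL0]. simpl.
    destruct (fresh_open_frame_cofinite P0) as [LP HP], (fresh_open_frame_cofinite Q0) as [LQ HQ].
    destruct (exists_fresh_name (a :: b :: L0 ++ LP ++ LQ)) as [c Hc].
    simpl in Hc. rewrite !in_app_iff in Hc.
    destruct (HL0 c ltac:(tauto)) as [_ [Hnb [Lc HLc]]]. rewrite !nbinders_swapA in Hnb.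
    split; [congruence|]. exists (c :: a :: b :: Lc ++ LP ++ LQ).
    intros [|d ds] Hnd Hl Hav; [discriminate|]. injection Hl as Hl. inversion Hnd; subst.
    assert (Hd : ~ In d (c :: a :: b :: Lc ++ LP ++ LQ)) by (apply Hav; simpl; auto).
    simpl in Hd. rewrite !in_app_iff in Hd.
    assert (Hc_ds : ~ In c ds) by avoids_contra Hav.
    assert (Ha_ds : ~ In a ds) by avoids_contra Hav.
    assert (Hb_ds : ~ In b ds) by avoids_contra Hav.
    assert (E : open_frame (swapA a c P0) ds = open_frame (swapA b c Q0) ds).
    { apply HLc; rewrite ?nbinders_swapA; auto. intros e He. avoids_contra Hav. }
    (* Renaming [a] to [d] factors through [c], and likewise for [b]. *)
    rewrite <- !nswap_open_frame_avoid in E by auto.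
    rewrite (nswap_rename _ a c d (open_frame P0 ds)), (nswap_rename _ b c d (open_frame Q0 ds));
      try (intro; subst; tauto); try (apply HP; tauto); try (apply HQ; tauto).
    rewrite E. reflexivity.
  - intros P0 P1 Q0 Q1 _ [Hn1 [L1 H1]] _ [Hn2 [L2 H2]]. split; [simpl; congruence|].
    exists (L1 ++ L2). intros ds Hnd Hl Hav.
    destruct (split_names ds (nbinders P0) (nbinders Q0) Hl) as [ds1 [ds2 [-> [Hl1 Hl2]]]].
    destruct (avoids_app_names _ _ _ Hav) as [Hav1 Hav2].
    rewrite (open_frame_Par P0 Q0), (open_frame_Par P1 Q1) by congruence. f_equal.
    + apply H1; auto; [eapply NoDup_app_remove_r; eauto|eapply avoids_app_l; eauto].
    + apply H2; [eapply NoDup_app_remove_l; eauto|congruence|eapply avoids_app_r; eauto].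
Qed.

Lemma fresh_open_frame x P : freshA x P ->
  exists L, forall ds, NoDup ds -> length ds = nbinders P -> avoids ds L -> ~ In x ds ->
    fresh x (open_frame P ds).
Proof.
  intros [Lx HLx]. destruct (fresh_open_frame_cofinite P) as [LP HP].
  destruct (exists_fresh_name (x :: Lx ++ LP)) as [c Hc]. simpl in Hc. rewrite in_app_iff in Hc.
  destruct (open_frame_alpha _ _ (HLx c ltac:(tauto))) as [Hnb [L1 H1]].
  rewrite nbinders_swapA in Hnb.
  exists (x :: c :: L1). intros ds Hnd Hl Hav Hx.
  assert (Hc_ds : ~ In c ds) by avoids_contra Hav.
  assert (E : open_frame (swapA x c P) ds = open_frame P ds).
  { apply H1; auto. rewrite nbinders_swapA. auto. eapply (avoids_app_r ds [x; c]), Hav. }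
  rewrite <- nswap_open_frame_avoid in E by auto.
  apply (fresh_of_nswap_fixed _ x c); [intro; subst; tauto|exact E|apply HP; tauto].
Qed.

Lemma fresh_open_frame_list xs P : (forall x, In x xs -> freshA x P) ->
  exists L, forall x ds, In x xs -> NoDup ds -> length ds = nbinders P -> avoids ds L ->
    ~ In x ds -> fresh x (open_frame P ds).
Proof.
  induction xs as [|y xs IH]; intros H; [exists []; intros x ds []|].
  destruct (fresh_open_frame y P (H y (or_introl eq_refl))) as [L1 H1].
  destruct IH as [L2 H2]; [intros; apply H; simpl; auto|].
  exists (L1 ++ L2). intros x ds [<-|Hin] Hnd Hl Hav Hx.
  - apply H1; auto. eapply avoids_app_l; eauto.
  - apply H2; auto. eapply avoids_app_r; eauto.
Qed.

Lemma frameR_open_frame P (bs : list name) S : frameR P bs S ->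
  length bs = nbinders P /\
  exists L, forall ds, NoDup ds -> length ds = nbinders P -> avoids ds L ->
    swaps nswap bs ds S = open_frame P ds.
Proof.
  induction 1; try (split; auto; exists []; intros [|d ds]; simpl; auto; discriminate).
  - destruct IHframeR1 as [Hl1 [L1 H1']], IHframeR2 as [Hl2 [L2 H2']].
    destruct (fresh_cofinite _ S1) as [LS1 HS1], (fresh_cofinite _ S2) as [LS2 HS2].
    rewrite length_app. split; [simpl; lia|].
    exists (L1 ++ L2 ++ b1 ++ b2 ++ LS1 ++ LS2). intros ds Hnd Hl Hav.
    destruct (split_names ds (nbinders P) (nbinders Q) Hl) as [ds1 [ds2 [-> [Hds1 Hds2]]]].
    pose proof (NoDup_app_remove_l _ _ Hnd) as Hnd2.
    pose proof (NoDup_app_remove_r _ _ Hnd) as Hnd1.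
    rewrite open_frame_Par, (swaps_equivariant2 _ _ _ _ comp_equivariant) by auto.
    f_equal.
    + rewrite swaps_app, (swaps_fresh _ b2 ds2 S1); [apply H1'; auto| | |congruence].
      * intros d Hd. avoids_contra Hav.
      * intros b Hb. apply H2. auto.
      * intros d Hd. apply HS1. avoids_contra Hav.
    + rewrite swaps_app_disjoint; auto.
      * apply H2'; auto. intros d Hd. avoids_contra Hav.
      * congruence.
      * intros b Hb. split; [apply H1; auto|]. avoids_contra Hav.
      * intros d Hd. split; [apply HS2; avoids_contra Hav|]. eapply NoDup_app_not_in; eauto.
      * intros d Hd. apply HS2. avoids_contra Hav.
  - destruct IHframeR as [Hl [L HL]]. simpl. split; [lia|]. exists (a :: L).
    intros [|d ds] Hnd Hlen Hav; [discriminate|]. injection Hlen as Hlen.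
    inversion Hnd; subst. simpl. rewrite HL; auto. intros e He. avoids_contra Hav.
  - destruct IHframeR as [Hl [L HL]], H0 as [Hl' [L' HL']].
    split; [lia|]. exists (L ++ L'). intros ds Hnd Hlen Hav.
    rewrite <- HL'; [apply HL| | |]; auto;
      [eapply avoids_app_l; eauto|lia|eapply avoids_app_r; eauto].
  - destruct IHframeR as [Hl [L HL]]. destruct (open_frame_alpha _ _ H) as [Hn [L' HL']].
    split; [lia|]. exists (L ++ L'). intros ds Hnd Hlen Hav.
    rewrite HL, HL'; auto; try lia; [eapply avoids_app_r|eapply avoids_app_l]; eauto.
Qed.

(** * Channels equivalent to the subject *)

(* [B] is universally quantified so that the [Par] and [Nu] cases can add to
   it the names opened elsewhere. *)
Definition subj_witness S P K : Prop :=
  exists L, forall ds B, NoDup ds -> length ds = nbinders P -> avoids ds L -> avoids ds B ->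
    (forall b, In b B -> freshA b P) ->
    exists M, (forall b, In b B -> fresh b M) /\ entails (comp S (open_frame P ds)) (chaneq M K).

Lemma subj_witness_prefix S P K M :
  (forall ds, open_frame P ds = unit) -> entails S (chaneq M K) ->
  (forall b, freshA b P -> fresh b M) -> subj_witness S P K.
Proof.
  intros Hunit HE Hfr. exists []. intros ds B _ _ _ _ HB. exists M.
  split; [auto|]. rewrite Hunit. apply comp_unit, HE.
Qed.

Lemma subj_witness_unit_frame S P Q K :
  (forall ds, aeq (open_frame P ds) unit) -> (forall ds, aeq (open_frame Q ds) unit) ->
  (forall b, freshA b Q -> freshA b P) -> subj_witness S P K -> subj_witness S Q K.
Proof.
  intros HP HQ Hfr [L0 HL0]. exists []. intros ds B _ _ _ _ HB.
  destruct (exists_fresh_names (L0 ++ B) (nbinders P)) as [ds0 [Hnd0 [Hl0 Hav0]]].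
  destruct (HL0 ds0 B Hnd0 Hl0 (avoids_app_l _ _ _ Hav0) (avoids_app_r _ _ _ Hav0)) as [M [HM HE]];
    [auto|].
  exists M. split; [exact HM|]. eapply aeq_entails; [|exact HE].
  eapply aeq_trans; [apply aeq_comp_r, HP|]. apply aeq_comp_r, aeq_sym, HQ.
Qed.

(* Adding the opened names [dsO] to [B] in the induction hypothesis keeps the
   witness fresh for [B] once the binders [bO] are renamed to [dsO]. *)
Lemma subj_witness_beside S SO R O bO K :
  subj_witness (comp SO S) R K -> frameR O bO SO ->
  (forall b, In b bO -> fresh b S /\ freshA b R /\ fresh b K) ->
  exists L, forall dsR dsO B, NoDup (dsR ++ dsO) ->
    length dsR = nbinders R -> length dsO = nbinders O ->
    avoids (dsR ++ dsO) L -> avoids (dsR ++ dsO) B -> (forall b, In b B -> freshA b R) ->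
    exists M, (forall b, In b B -> fresh b M) /\
      entails (comp (comp (open_frame O dsO) S) (open_frame R dsR)) (chaneq M K).
Proof.
  intros [L0 HL0] Hfr Hb.
  destruct (frameR_open_frame O bO SO Hfr) as [_ [LO HLO]].
  destruct (fresh_open_frame_list bO R) as [LF HLF]; [intros; apply Hb; auto|].
  destruct (fresh_cofinite _ S) as [LS HS], (fresh_cofinite _ K) as [LK HK],
    (freshA_cofinite R) as [LR HR], (fresh_open_frame_cofinite R) as [LOR HOR].
  exists (L0 ++ LO ++ bO ++ LF ++ LS ++ LK ++ LR ++ LOR).
  intros dsR dsO B Hnd HlR HlO Hav HavB HB.
  pose proof (NoDup_app_remove_r _ _ Hnd) as HndR.
  pose proof (NoDup_app_remove_l _ _ Hnd) as HndO.
  destruct (HL0 dsR (B ++ dsO)) as [M0 [HM0 HE]]; auto.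
  - intros d Hd. avoids_contra Hav.
  - intros d Hd Hin. apply in_app_iff in Hin as [Hin|Hin].
    + revert Hin. avoids_contra HavB.
    + exact (NoDup_app_not_in _ _ _ Hnd Hd Hin).
  - intros b Hin. apply in_app_iff in Hin as [Hin|Hin]; auto. apply HR. avoids_contra Hav.
  - apply (entails_swaps bO dsO) in HE.
    rewrite !(swaps_equivariant2 _ _ _ _ comp_equivariant),
      (swaps_equivariant2 _ _ _ _ chaneq_equivariant), HLO in HE
      by (auto; intros d Hd; avoids_contra Hav).
    rewrite (swaps_fresh _ bO dsO S), (swaps_fresh _ bO dsO K),
      (swaps_fresh _ bO dsO (open_frame R dsR)) in HE.
    + exists (swaps nswap bO dsO M0). split; [|exact HE].
      intros b Hin. apply fresh_swaps; auto using in_or_app.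
      intro Hd. apply (HavB b); [apply in_or_app|]; auto.
    + intros b Hin. apply HLF; auto.
      * intros d Hd. avoids_contra Hav.
      * intro Hd. apply (Hav b); [apply in_or_app; auto|rewrite !in_app_iff; tauto].
    + intros d Hd. apply HOR; [avoids_contra Hav|].
      intro Hd'. exact (NoDup_app_not_in _ _ _ Hnd Hd' Hd).
    + intros b Hin. apply Hb, Hin.
    + intros d Hd. apply HK. avoids_contra Hav.
    + intros b Hin. apply Hb, Hin.
    + intros d Hd. apply HS. avoids_contra Hav.
Qed.

Lemma subj_witness_Par_l S P Q bQ SQ K :
  frameR Q bQ SQ -> (forall b, In b bQ -> fresh b S /\ freshA b P /\ fresh b K) ->
  subj_witness (comp SQ S) P K -> subj_witness S (Par P Q) K.
Proof.
  intros Hfr Hb HP. destruct (subj_witness_beside S SQ P Q bQ K HP Hfr Hb) as [L HL].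
  exists L. intros ds B Hnd Hl Hav HavB HB.
  destruct (split_names ds (nbinders P) (nbinders Q) Hl) as [ds1 [ds2 [-> [Hl1 Hl2]]]].
  destruct (HL ds1 ds2 B) as [M [HM HE]]; auto.
  { intros b Hin. eapply freshA_Par_l, HB, Hin. }
  exists M. split; [exact HM|]. rewrite open_frame_Par by exact Hl1.
  eapply aeq_entails; [|exact HE].
  eapply aeq_trans; [apply aeq_comp_l, aeq_comm|].
  eapply aeq_trans; [apply aeq_assoc|]. apply aeq_comp_r, aeq_comm.
Qed.

Lemma subj_witness_Par_r S P Q bP SP K :
  frameR P bP SP -> (forall b, In b bP -> fresh b S /\ freshA b Q /\ fresh b K) ->
  subj_witness (comp SP S) Q K -> subj_witness S (Par P Q) K.
Proof.
  intros Hfr Hb HQ. destruct (subj_witness_beside S SP Q P bP K HQ Hfr Hb) as [L HL].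
  exists L. intros ds B Hnd Hl Hav HavB HB.
  destruct (split_names ds (nbinders P) (nbinders Q) Hl) as [ds1 [ds2 [-> [Hl1 Hl2]]]].
  destruct (HL ds2 ds1 B) as [M [HM HE]];
    auto using NoDup_app_swap, avoids_app_swap.
  { intros b Hin. eapply freshA_Par_r, HB, Hin. }
  exists M. split; [exact HM|]. rewrite open_frame_Par by exact Hl1.
  eapply aeq_entails; [|exact HE].
  eapply aeq_trans; [apply aeq_comp_l, aeq_comm|]. apply aeq_assoc.
Qed.

(* The opened name [d] of [b] joins [B], while [b] itself leaves it: [b] is
   fresh for [Nu b P] but not necessarily for [P]. *)
Lemma subj_witness_Nu S P K b : fresh b S -> fresh b K ->
  subj_witness S P K -> subj_witness S (Nu b P) K.
Proof.
  intros HbS HbK [L0 HL0].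
  destruct (fresh_cofinite _ S) as [LS HS], (fresh_cofinite _ K) as [LK HK],
    (freshA_cofinite P) as [LP HP].
  exists (b :: L0 ++ LS ++ LK ++ LP).
  intros [|d ds] B Hnd Hl Hav HavB HB; [discriminate|].
  injection Hl as Hl. inversion Hnd as [|? ? Hdds Hnd']; subst.
  assert (Hd : ~ In d (b :: L0 ++ LS ++ LK ++ LP)) by (apply Hav; simpl; auto).
  simpl in Hd. rewrite !in_app_iff in Hd.
  destruct (HL0 ds (d :: remove Nat.eq_dec b B)) as [M0 [HM0 HE]]; auto.
  - intros e He. avoids_contra Hav.
  - intros e He Hin. destruct Hin as [->|Hin]; [contradiction|].
    apply in_remove in Hin as [Hin _]. revert Hin. avoids_contra HavB.
  - intros x [<-|Hx]; [apply HP; tauto|].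
    apply in_remove in Hx as [Hx Hxb]. eapply freshA_Nu; eauto.
  - apply (entails_eqv p b d) in HE. rewrite comp_eqv, chaneq_eqv in HE.
    rewrite (nswap_fresh _ b d S), (nswap_fresh _ b d K) in HE
      by first [assumption | apply HS; tauto | apply HK; tauto].
    exists (nswap b d M0). split; [|exact HE].
    intros x Hx. destruct (Nat.eq_dec x b) as [->|Hxb].
    + apply fresh_nswap_self, HM0. left. reflexivity.
    + apply fresh_nswap_other; [apply HM0; right; apply in_in_remove; auto|auto|].
      intros ->. apply (HavB d); [left|]; auto.
Qed.

Lemma subj_witness_alpha S P Q K : alpha P Q -> subj_witness S P K -> subj_witness S Q K.
Proof.
  intros Hal [L0 HL0]. destruct (open_frame_alpha P Q Hal) as [Hn [L1 HL1]].
  exists (L0 ++ L1). intros ds B Hnd Hl Hav HavB HB.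
  destruct (HL0 ds B Hnd ltac:(lia) (avoids_app_l _ _ _ Hav) HavB) as [M [HM HE]].
  { intros b Hb. eapply freshA_alpha; eauto. }
  exists M. split; [exact HM|]. rewrite <- HL1; auto; [lia|eapply avoids_app_r; eauto].
Qed.

Lemma fresh_act_subj b (al : action p) K : fresh_act b al -> subj al = Some K -> fresh b K.
Proof. destruct al; simpl; intros H E; try discriminate; injection E as <-; tauto. Qed.

Lemma tr_alpha_subj (al be : action p) P' Q' : tr_alpha al P' be Q' ->
  subj al = subj be /\ (al = ATau -> be = ATau).
Proof. destruct al, be; simpl; intros H; try contradiction; intuition congruence. Qed.

Lemma bodies_guardedB_in bs phi P : bodies_guardedB bs -> in_branches phi P bs ->
  guarded P /\ bodies_guarded P.
Proof.
  induction bs as [|phi' P' bs IH]; simpl; intros H Hin; [contradiction|].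
  destruct Hin as [[-> ->]|Hin]; tauto.
Qed.

Lemma trans_subj_witness S P al P' K : trans S P al P' -> al <> ATau -> subj al = Some K ->
  bodies_guarded P -> subj_witness S P K.
Proof.
  intros Htr. revert K.
  induction Htr; intros K0 Hal HK Hg; simpl in HK, Hg; try contradiction.
  - injection HK as <-. apply (subj_witness_prefix _ _ _ M); auto.
    intros b. apply freshA_Inp_subject.
  - injection HK as <-. apply (subj_witness_prefix _ _ _ M); auto.
    intros b. apply freshA_Out_subject.
  - destruct (bodies_guardedB_in bs phi P Hg H) as [HgP HbP].
    apply (subj_witness_unit_frame S P); auto.
    + intros ds. apply guarded_open_frame, HgP.
    + intros ds phi'. reflexivity.
    + intros b Hb. eapply freshA_Case_branch; eauto.
  - destruct Hg as [HgP _]. apply (subj_witness_Par_l S P Q bQ SQ K0 H); auto.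
    intros b Hb. destruct (H0 b Hb) as [? [? ?]]. eauto using fresh_act_subj.
  - destruct Hg as [_ HgQ]. apply (subj_witness_Par_r S P Q bP SP K0 H); auto.
    intros b Hb. destruct (H0 b Hb) as [? [? ?]]. eauto using fresh_act_subj.
  - apply subj_witness_Nu; eauto using fresh_act_subj.
  - injection HK as <-. apply subj_witness_Nu; auto. apply IHHtr; auto. discriminate.
  - destruct Hg as [HgP HbP]. apply (subj_witness_unit_frame S (Par P (Bang P))); auto.
    + intros ds. apply guarded_open_frame. split; exact HgP.
    + intros ds phi. reflexivity.
    + intros b Hb. apply freshA_Par; [apply freshA_Bang|]; exact Hb.
    + apply IHHtr; simpl; auto.
  - destruct (tr_alpha_subj _ _ _ _ H0) as [Hs Ht].
    apply (subj_witness_alpha S P Q K0 H). apply IHHtr; [intuition congruence|congruence|].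
    apply (alpha_guarded Q P (alpha_sym P Q H)), Hg.
Qed.

Lemma subj_witness_frameR S P K B bP SP : subj_witness S P K -> frameR P bP SP ->
  (forall b, In b B -> freshA b P) -> (forall b, In b bP -> fresh b S /\ fresh b K /\ ~ In b B) ->
  exists M, (forall b, In b B -> fresh b M) /\ entails (comp S SP) (chaneq M K).
Proof.
  intros [L0 HL0] Hfr HB Hb.
  destruct (frameR_open_frame P bP SP Hfr) as [Hl [LK HLK]].
  destruct (fresh_cofinite _ S) as [LS HS], (fresh_cofinite _ K) as [LKK HKK].
  destruct (exists_fresh_names (L0 ++ LK ++ B ++ LS ++ LKK) (nbinders P)) as [ds [Hnd [Hlen Hav]]].
  destruct (HL0 ds B Hnd Hlen) as [M0 [HM0 HE]]; auto; try (intros d Hd; avoids_contra Hav).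
  rewrite <- HLK in HE by (auto; intros d Hd; avoids_contra Hav).
  apply (entails_unswaps bP ds) in HE.
  rewrite (unswaps_equivariant2 _ _ _ _ comp_equivariant),
    (unswaps_equivariant2 _ _ _ _ chaneq_equivariant), unswaps_swaps,
    (unswaps_fresh _ bP ds S), (unswaps_fresh _ bP ds K) in HE;
    try (intros b Hin; apply Hb, Hin);
    try (intros d Hd; first [apply HS | apply HKK]; avoids_contra Hav).
  exists (unswaps bP ds M0). split; [|exact HE].
  intros x Hx. apply fresh_unswaps; auto.
  - intro Hin. apply (Hb x Hin). exact Hx.
  - intro Hin. revert Hx. avoids_contra Hav.
Qed.

End PsiCalculus.

Theorem mainTheorem5 (p : psi) (B : list name) (S : A p) (P P' : agent p)
    (al : action p) (K : T p) (bP : list name) (SP : A p) :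
  wf P ->
  (forall b, In b B -> freshA b P) ->
  trans S P al P' ->
  al <> ATau ->
  subj al = Some K ->
  frameR P bP SP ->
  (forall b, In b bP -> fresh b S /\ freshA b P /\ fresh b K /\ ~ In b B) ->
  exists M : T p, (forall b, In b B -> fresh b M) /\ entails (comp S SP) (chaneq M K).
Proof.
  intros Hwf HB Htr Hal Hsubj Hfr Hb.
  apply (subj_witness_frameR p S P K B bP SP); auto.
  - exact (trans_subj_witness p S P al P' K Htr Hal Hsubj (wf_bodies_guarded p P Hwf)).
  - intros b Hin. destruct (Hb b Hin) as (? & _ & ? & ?). auto.
Qed.
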